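(* For every ranking profile $R$ over a finite set of $m\geq 2$ candidates, there exists a ranking that is pair-priceable for $R$.
   Context: Let $C$ be a set of $m$ candidates. A ranking is a strict linear order over $C$; $\mathcal{R}$ denotes the set of all rankings over $C$. A ranking profile is a function $R:\mathcal{R}\to[0,1]$ with $\sum_\succ R(\succ)=1$. For a ranking $\succ$, $A(\succ)=\{(x,y)\in C\times C:x\succ y\}$. For $x\in X\subseteq C$, $u(\succ,x,X)=|\{y\in X\setminus\{x\}:x\succ y\}|$. A ranking $\rhd=x_1,\dots,x_m$ is pair-priceable for $R$ if there is $\pi:\mathcal{R}\times A(\rhd)\to[0,1]$ such that (1) $\pi(\succ,(x_i,x_j))\leq u(\succ,x_i,\{x_i,x_j\})$ for all $\succ$ and $(x_i,x_j)\in A(\rhd)$; (2) $\sum_{(x_i,x_j)\in A(\rhd)}\pi(\succ,(x_i,x_j))\leq\binom{m}{2}R(\succ)$ for all $\succ$; (3) $\sum_\succ\pi(\succ,(x_i,x_j))\leq1$ for all $(x_i,x_j)\in A(\rhd)$; (4) $\sum_\succ\sum_{(x_i,x_j)\in A(\rhd)}\pi(\succ,(x_i,x_j))>\binom{m}{2}-1$. *)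

From HB Require Import structures.
From mathcomp Require Import all_boot all_order all_algebra all_fingroup.
From mathcomp Require Import all_classical all_reals.
Set Implicit Arguments. Unset Strict Implicit. Unset Printing Implicit Defensive.
Import Order.TTheory GRing.Theory Num.Theory.
Local Open Scope ring_scope.

(* A ranking (strict linear order on C) is encoded by a
   permutation s : {perm 'I_m}, where s i is the candidate in position i
   (position 0 = top). *)
Definition ranking (m : nat) := {perm 'I_m}.

Definition prefers (m : nat) (s : ranking m) (x y : 'I_m) : bool :=
  ((s^-1)%g x < (s^-1)%g y)%N.

Definition util (m : nat) (s : ranking m) (x : 'I_m) (X : {set 'I_m}) : nat :=
  #|[set y in X | (y != x) && prefers s x y]|.

Definition is_profile (R : realType) (m : nat) (P : ranking m -> R) : Prop :=
  (forall s, 0 <= P s <= 1) /\ \sum_(s : ranking m) P s = 1.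

(* Pair-priceability of ranking t for profile P.  pi is given on all triples,
   but only its values on pairs (x,y) in A(t) (i.e. prefers t x y) matter. *)
Definition pair_priceable (R : realType) (m : nat) (P : ranking m -> R)
    (t : ranking m) : Prop :=
  exists pi : ranking m -> 'I_m -> 'I_m -> R,
    (forall s x y, prefers t x y -> 0 <= pi s x y <= 1) /\
    (forall s x y, prefers t x y -> pi s x y <= (util s x [set x; y])%:R) /\
    (forall s, \sum_(x : 'I_m) \sum_(y : 'I_m | prefers t x y) pi s x y
                 <= ('C(m, 2))%:R * P s) /\
    (forall x y, prefers t x y -> \sum_(s : ranking m) pi s x y <= 1) /\
    ('C(m, 2))%:R - 1 <
      \sum_(s : ranking m) \sum_(x : 'I_m) \sum_(y : 'I_m | prefers t x y) pi s x y.

(* The ranking is built greedily from the top.  Voters start with budgets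
   b(s) = binom(m,2) R(s), of total beta.  Among the remaining candidates X
   (k of them) put first the candidate x with the largest b-weighted Borda
   score inside X.  Comparing the Borda scores of any nonempty Y included in
   X \ {x} with that of x shows that the voters preferring x to some member
   of Y hold at least beta (|Y| + 1) / (2k) of the budget; by the
   real-valued (supply-demand) form of Hall's theorem, every y in X \ {x}
   can then be paid p = min(1, beta / (2 (k - 1))) by voters preferring x
   to y.  Recursing with the leftover budgets, the total payment is
   binom(m,2) - 3/4 when m >= 3 and 1/2 when m = 2. *)

From HB Require Import structures.
From mathcomp Require Import all_boot all_order all_algebra all_fingroup.
From mathcomp Require Import all_classical all_reals.
(* Re-imported so that their lemmas shadow the homonyms from all_classical. *)
From mathcomp Require Import fintype finset.
From mathcomp Require Import ring lra zify.
Set Implicit Arguments. Unset Strict Implicit. Unset Printing Implicit Defensive.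
Import Order.TTheory GRing.Theory Num.Theory.
Local Open Scope ring_scope.

Section Restriction.
Variables (R : realDomainType) (T : finType).
Implicit Types (A B Z : {set T}) (F : T -> R).

Lemma ler_psum_subset A B F :
  A \subset B -> (forall t, 0 <= F t) ->
  \sum_(t in A) F t <= \sum_(t in B) F t.
Proof.
move=> AB F_ge0; rewrite [X in _ <= X](big_setID A) /= (setIidPr AB) lerDl.
exact: sumr_ge0.
Qed.

Lemma ler_psum_mem A F t :
  t \in A -> (forall u, 0 <= F u) -> F t <= \sum_(u in A) F u.
Proof. by move=> tA F_ge0; rewrite (bigD1 t) //= lerDl sumr_ge0. Qed.

Lemma big_setU_setD A B F :
  \sum_(t in A :|: B) F t = \sum_(t in A :\: B) F t + \sum_(t in B) F t.
Proof.
rewrite (big_setID B) addrC; congr (_ + _); apply: eq_bigl => t;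
  by rewrite !inE; case: (t \in A); case: (t \in B).
Qed.

Definition restrict A F t := if t \in A then F t else 0.

Definition lower_at F t0 x t := F t - (if t == t0 then x else 0).

Definition supp F := [set t | F t != 0].

Lemma sum_restrict A F Z :
  \sum_(t in Z) restrict A F t = \sum_(t in Z :&: A) F t.
Proof.
rewrite big_mkcond [RHS]big_mkcond /=; apply: eq_bigr => t _.
by rewrite /restrict inE; case: (t \in Z); case: (t \in A).
Qed.

Lemma restrict_ge0 A F : (forall t, 0 <= F t) -> forall t, 0 <= restrict A F t.
Proof. by move=> F_ge0 t; rewrite /restrict; case: ifP. Qed.

Lemma restrictCE A F t : F t = restrict A F t + restrict (~: A) F t.
Proof. by rewrite /restrict inE; case: (t \in A); rewrite ?addr0 ?add0r. Qed.

Lemma supp_restrict A F : supp (restrict A F) \subset supp F.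
Proof. by apply/subsetP => t; rewrite !inE /restrict; case: ifP; rewrite ?eqxx. Qed.

Lemma card_supp_restrict_lt A F t :
  t \notin A -> F t != 0 -> (#|supp (restrict A F)| < #|supp F|)%N.
Proof.
move=> tA Ft; apply/proper_card/properP; split; first exact: supp_restrict.
by exists t; rewrite !inE /restrict ?(negbTE tA) ?eqxx.
Qed.

Lemma sum_lower_at F t0 x Z :
  \sum_(t in Z) lower_at F t0 x t = \sum_(t in Z) F t - (if t0 \in Z then x else 0).
Proof.
rewrite sumrB; congr (_ - _); have [t0Z|t0Z] := boolP (t0 \in Z).
  by rewrite (bigD1 t0) //= eqxx big1 ?addr0 // => t /andP[_ /negbTE ->].
by apply: big1 => t tZ; case: eqP => // ett0; rewrite -ett0 tZ in t0Z.
Qed.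

Lemma lower_at_ge0 F t0 x :
  (forall t, 0 <= F t) -> x <= F t0 -> forall t, 0 <= lower_at F t0 x t.
Proof.
move=> F_ge0 xF t; rewrite /lower_at.
by case: (t =P t0) => [->|_]; rewrite ?subr_ge0 ?subr0.
Qed.

Lemma supp_lower_at F t0 x : F t0 != 0 -> supp (lower_at F t0 x) \subset supp F.
Proof.
move=> Ft0; apply/subsetP => t; rewrite !inE /lower_at.
by case: (t =P t0) => [->|_]; rewrite ?subr0.
Qed.

Lemma card_supp_lower_at_lt F t0 : F t0 != 0 ->
  (#|supp (lower_at F t0 (F t0))| < #|supp F|)%N.
Proof.
move=> Ft0; apply/proper_card/properP; split; first exact: supp_lower_at.
by exists t0; rewrite !inE /lower_at ?eqxx ?subrr ?eqxx.
Qed.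

End Restriction.

Section Transport.
Variables (R : realDomainType) (I J : finType) (E : I -> J -> bool).
Implicit Types (b : I -> R) (d : J -> R) (Y Z : {set J}).

Definition neighbours Y : {set I} := [set i | [exists j in Y, E i j]].

Definition slack b d Y := \sum_(i in neighbours Y) b i - \sum_(j in Y) d j.

Definition hall_condition b d := forall Y, 0 <= slack b d Y.

Definition transport b d := exists f : I -> J -> R,
  [/\ forall i j, 0 <= f i j, forall i j, ~~ E i j -> f i j = 0,
      forall i, \sum_j f i j <= b i & forall j, \sum_i f i j = d j].

Definition support_size b d := (#|supp d| + #|supp b|)%N.

Lemma neighbours1 i j : (i \in neighbours [set j]) = E i j.
Proof.
rewrite inE; apply/existsP/idP => [[k /andP[/set1P -> //]]|Eij].
by exists j; rewrite set11.
Qed.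

Lemma neighboursS Y Z : Y \subset Z -> neighbours Y \subset neighbours Z.
Proof.
move/subsetP => YZ; apply/subsetP => i; rewrite !inE => /existsP[j /andP[jY Eij]].
by apply/existsP; exists j; rewrite YZ.
Qed.

Lemma neighboursU Y Z : neighbours (Y :|: Z) = neighbours Y :|: neighbours Z.
Proof.
apply/setP => i; rewrite !inE; apply/existsP/orP.
  by case=> j /andP[]; rewrite inE => /orP[] jYZ Eij; [left|right];
     apply/existsP; exists j; rewrite jYZ.
by case=> /existsP[j /andP[jYZ Eij]]; exists j; rewrite inE jYZ ?orbT.
Qed.

Lemma neighboursI Y Z : neighbours (Y :&: Z) \subset neighbours Y :&: neighbours Z.
Proof.
by rewrite subsetI !neighboursS ?subsetIl ?subsetIr.
Qed.

Lemma transport0 b d :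
  (forall i, 0 <= b i) -> (forall j, d j = 0) -> transport b d.
Proof.
move=> b_ge0 d0; exists (fun _ _ => 0); split=> // [i|j].
  by rewrite big1.
by rewrite big1 // d0.
Qed.

Lemma transport1 i0 j0 x : E i0 j0 -> 0 <= x ->
  transport (fun i => if i == i0 then x else 0) (fun j => if j == j0 then x else 0).
Proof.
move=> Eij x_ge0.
exists (fun i j => if (i == i0) && (j == j0) then x else 0); split.
- by move=> i j; case: ifP.
- by move=> i j; case: ifP => // /andP[/eqP -> /eqP ->]; rewrite Eij.
- move=> i; case: (i =P i0) => _ /=; last by rewrite big1.
  by rewrite -big_mkcond big_pred1_eq.
- move=> j; case: (j =P j0) => _; last by rewrite big1 // => i; rewrite andbF.
  by under eq_bigr do rewrite andbT; rewrite -big_mkcond big_pred1_eq.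
Qed.

Lemma transportD b1 b2 d1 d2 b d :
  (forall i, b i = b1 i + b2 i) -> (forall j, d j = d1 j + d2 j) ->
  transport b1 d1 -> transport b2 d2 -> transport b d.
Proof.
move=> bE dE [f1 [f1_ge0 f1E f1b f1d]] [f2 [f2_ge0 f2E f2b f2d]].
exists (fun i j => f1 i j + f2 i j); split.
- by move=> i j; rewrite addr_ge0.
- by move=> i j nEij; rewrite f1E // f2E // addr0.
- by move=> i; rewrite big_split bE lerD.
- by move=> j; rewrite big_split /= f1d f2d dE.
Qed.

Lemma transport_lower_at b d i0 j0 x : E i0 j0 -> 0 <= x ->
  transport (lower_at b i0 x) (lower_at d j0 x) -> transport b d.
Proof.
move=> Eij x_ge0 tr; apply: (transportD _ _ tr (transport1 Eij x_ge0)) => *;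
  by rewrite /lower_at subrK.
Qed.

End Transport.

Lemma exists_min_pos (R : realDomainType) (T : finType) (P : pred T) (F : T -> R) mu :
  0 < mu -> (forall t, P t -> 0 < F t) ->
  exists x, [/\ 0 < x, x <= mu, forall t, P t -> x <= F t &
    x = mu \/ x < mu /\ exists2 t, P t & F t = x].
Proof.
move=> mu_gt0 F_gt0; have [/existsP[t0 Pt0]|/existsPn noP] := boolP [exists t, P t].
  case: (arg_minP F Pt0) => t Pt Fmin; have [Ft_lt|mu_le] := ltP (F t) mu.
    exists (F t); split; [exact: F_gt0 | exact: ltW | exact: Fmin | right].
    by split => //; exists t.
  by exists mu; split => //; [move=> u Pu; apply: le_trans mu_le (Fmin u Pu) | left].
by exists mu; split => //; [move=> t Pt; move: (noP t); rewrite Pt | left].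
Qed.

Section HallTransport.
Variables (R : realDomainType) (I J : finType) (E : I -> J -> bool).
Implicit Types (b : I -> R) (d : J -> R) (Y Z : {set J}).
Local Notation neighbours := (neighbours E).
Local Notation slack := (slack E).
Local Notation hall_condition := (hall_condition E).
Local Notation transport := (transport E).

Lemma hall_restrict b d Y : (forall i, 0 <= b i) -> hall_condition b d ->
  hall_condition (restrict (neighbours Y) b) (restrict Y d).
Proof.
move=> b_ge0 hb Z; rewrite /slack subr_ge0 !sum_restrict.
have := hb (Z :&: Y); rewrite /slack subr_ge0 => /le_trans; apply.
exact: ler_psum_subset (neighboursI _ _ _) b_ge0.
Qed.

Lemma hall_restrictC b d Y : hall_condition b d -> slack b d Y <= 0 ->
  hall_condition (restrict (~: neighbours Y) b) (restrict (~: Y) d).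
Proof.
move=> hb tight Z; rewrite /slack subr_ge0 !sum_restrict -!setDE.
have := hb (Z :|: Y); move: tight.
by rewrite /slack neighboursU !big_setU_setD; lra.
Qed.

Lemma hall_lower_at b d i0 j0 x : E i0 j0 -> (forall i, 0 <= b i) ->
  hall_condition b d -> x <= b i0 ->
  (forall Z, j0 \notin Z -> i0 \in neighbours Z -> [exists j in Z, d j != 0] ->
     x <= slack b d Z) ->
  hall_condition (lower_at b i0 x) (lower_at d j0 x).
Proof.
move=> Eij b_ge0 hb xb x_le_slack Z; have := hb Z.
rewrite /slack (sum_lower_at b) (sum_lower_at d); have [j0Z|j0Z] := boolP (j0 \in Z).
  suff -> : i0 \in neighbours Z by lra.
  by rewrite inE; apply/existsP; exists j0; rewrite j0Z.
rewrite subr0.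
have [i0Z|_] := boolP (i0 \in neighbours Z); last by rewrite subr0.
have [demand|/existsPn no_demand] := boolP [exists j in Z, d j != 0].
  by have := x_le_slack Z j0Z i0Z demand; rewrite /slack; lra.
have -> : \sum_(j in Z) d j = 0.
  by apply: big1 => j jZ; apply/eqP; move: (no_demand j); rewrite jZ negbK.
by have := ler_psum_mem i0Z b_ge0; lra.
Qed.

Lemma hall_supplier b d j0 : (forall i, 0 <= b i) -> hall_condition b d ->
  0 < d j0 -> exists2 i0, E i0 j0 & 0 < b i0.
Proof.
move=> b_ge0 hb dj0; have := hb [set j0]; rewrite /slack big_set1 subr_ge0 => le.
have /eqP : \sum_(i in neighbours [set j0]) b i != 0.
  by rewrite gt_eqF // (lt_le_trans dj0).
case/(psumr_neq0P (fun i _ => b_ge0 i)) => i0 /andP[].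
by rewrite neighbours1; exists i0.
Qed.

Definition tight_split b d Y :=
  [&& [exists j in Y, d j != 0], [exists j in ~: Y, d j != 0] & slack b d Y <= 0].

Lemma tight_split_lower_at b d i0 j0 x Z :
  j0 \notin Z -> i0 \in neighbours Z -> [exists j in Z, d j != 0] ->
  x < d j0 -> slack b d Z = x -> tight_split (lower_at b i0 x) (lower_at d j0 x) Z.
Proof.
move=> j0Z i0Z /existsP[j /andP[jZ dj]] x_lt slackZ; apply/and3P; split.
- apply/existsP; exists j; rewrite jZ /lower_at.
  by case: (j =P j0) => [ej|_]; [rewrite -ej jZ in j0Z | rewrite subr0].
- by apply/existsP; exists j0; rewrite inE j0Z /lower_at eqxx subr_eq0 gt_eqF.
- move: slackZ; rewrite /slack (sum_lower_at b) (sum_lower_at d).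
  by rewrite i0Z (negbTE j0Z); lra.
Qed.

Section Step.
Variable n : nat.
Hypothesis IH : forall b d, (support_size b d < n)%N ->
  (forall i, 0 <= b i) -> (forall j, 0 <= d j) -> hall_condition b d -> transport b d.

Lemma transport_tight_split b d Y : (support_size b d <= n)%N ->
  (forall i, 0 <= b i) -> (forall j, 0 <= d j) -> hall_condition b d ->
  tight_split b d Y -> transport b d.
Proof.
move=> bdn b_ge0 d_ge0 hb /and3P[/existsP[j1 /andP[j1Y dj1]]].
move=> /existsP[j2 /andP[j2Y dj2]] tight; rewrite inE in j2Y.
have j1Y' : j1 \notin ~: Y by rewrite inE negbK.
have supp_le (A : {set I}) (F : I -> R) := subset_leq_card (supp_restrict A F).
apply: (transportD (restrictCE (neighbours Y) b) (restrictCE Y d)); apply: IH;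
  try exact: restrict_ge0.
- have := card_supp_restrict_lt j2Y dj2; have := supp_le (neighbours Y) b.
  by move: bdn; rewrite /support_size; lia.
- exact: hall_restrict.
- have := card_supp_restrict_lt j1Y' dj1; have := supp_le (~: neighbours Y) b.
  by move: bdn; rewrite /support_size; lia.
- exact: hall_restrictC.
Qed.

Lemma transport_reduced b d : (support_size b d <= n)%N ->
  (forall i, 0 <= b i) -> (forall j, 0 <= d j) -> hall_condition b d ->
  (support_size b d < n)%N \/ (exists Y, tight_split b d Y) -> transport b d.
Proof.
by move=> bdn b_ge0 d_ge0 hb [lt_n|[Y split]];
  [exact: IH | exact: transport_tight_split split].
Qed.

(* Unless a tight set splits the demand (both halves are then solved by
   induction), route x units along an edge (i0, j0), with x as large as
   Hall's condition allows: afterwards a supply or a demand vanishes, or a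
   critical set has become tight. *)
Lemma transport_step b d : (support_size b d <= n)%N ->
  (forall i, 0 <= b i) -> (forall j, 0 <= d j) -> hall_condition b d -> transport b d.
Proof.
move=> bdn b_ge0 d_ge0 hb.
have [/existsP[Y split]|no_split] := boolP [exists Y, tight_split b d Y].
  by apply: transport_reduced => //; right; exists Y.
have [/existsP[j0 dj0]|/existsPn no_demand] := boolP [exists j, d j != 0]; last first.
  by apply: transport0 => // j; apply/eqP; rewrite -[_ == 0]negbK no_demand.
have dj0_gt0 : 0 < d j0 by rewrite lt0r dj0 d_ge0.
have [i0 Eij bi0_gt0] := hall_supplier b_ge0 hb dj0_gt0.
pose critical Z := [&& j0 \notin Z, i0 \in neighbours Z & [exists j in Z, d j != 0]].
have slack_gt0 Z : critical Z -> 0 < slack b d Z.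
  case/and3P => j0Z _ demand; rewrite ltNge; apply: contra no_split => tight.
  apply/existsP; exists Z; rewrite /tight_split demand tight andbT.
  by apply/existsP; exists j0; rewrite inE j0Z.
have mu_gt0 : 0 < Num.min (d j0) (b i0) by rewrite lt_min dj0_gt0.
have [x [x_gt0 x_le_mu x_le_slack x_cases]] := exists_min_pos mu_gt0 slack_gt0.
have [x_le_dj0 x_le_bi0] : x <= d j0 /\ x <= b i0 by apply/andP; rewrite -le_min.
have bi0 : b i0 != 0 by rewrite gt_eqF.
have supp_b := subset_leq_card (supp_lower_at x bi0).
have supp_d := subset_leq_card (supp_lower_at x dj0).
apply: (transport_lower_at Eij (ltW x_gt0)); apply: transport_reduced.
- exact: leq_trans (leq_add supp_d supp_b) bdn.
- exact: lower_at_ge0.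
- exact: lower_at_ge0.
- by apply: hall_lower_at => // Z j0Z i0Z demand; apply: x_le_slack; apply/and3P.
case: x_cases => [x_mu|[x_lt_mu [Z /and3P[j0Z i0Z demand] slackZ]]].
  left; apply: leq_trans bdn; move: supp_b supp_d; rewrite /support_size x_mu.
  have [_|_] := leP (d j0) (b i0) => supp_b supp_d.
    by rewrite -addSn leq_add // card_supp_lower_at_lt.
  by rewrite -addnS leq_add // card_supp_lower_at_lt.
right; exists Z; apply: tight_split_lower_at => //.
by apply: lt_le_trans x_lt_mu _; rewrite ge_min lexx.
Qed.

End Step.

Theorem hall_transport b d : (forall i, 0 <= b i) -> (forall j, 0 <= d j) ->
  hall_condition b d -> transport b d.
Proof.
suff step n : forall b d, (support_size b d <= n)%N ->
    (forall i, 0 <= b i) -> (forall j, 0 <= d j) -> hall_condition b d -> transport b d.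
  exact: step.
by elim: n => [|n IH] b' d' bdn; apply: (transport_step _ bdn).
Qed.

End HallTransport.

Section Rankings.
Variable m : nat.
Implicit Types (s : ranking m) (X Y : {set 'I_m}).
Local Open Scope nat_scope.

Lemma prefers_irr s u : prefers s u u = false.
Proof. exact: ltnn. Qed.

Lemma prefers_asym s u v : prefers s u v -> prefers s v u = false.
Proof. by rewrite /prefers => /ltnW; rewrite leqNgt => /negbTE. Qed.

Lemma prefers_total s u v : u != v -> prefers s u v || prefers s v u.
Proof.
move=> uv; rewrite /prefers -neq_ltn; apply: contra uv => /eqP/val_inj suv.
by apply/eqP; apply: (perm_inj suv).
Qed.

Lemma prefers_trans s u v w : prefers s u v -> prefers s v w -> prefers s u w.
Proof. exact: ltn_trans. Qed.

Definition below s X u := [set v in X | prefers s u v].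

Lemma belowS s X Y u : Y \subset X -> below s Y u \subset below s X u.
Proof.
by move/subsetP => YX; apply/subsetP => v; rewrite !inE => /andP[/YX -> ->].
Qed.

Lemma card_below_le s X x : x \in X -> #|below s X x| <= #|X|.-1.
Proof.
move=> xX; rewrite (cardsD1 x X) xX add1n /=; apply/subset_leq_card/subsetP => v.
by rewrite !inE => /andP[vX xv]; rewrite vX andbT; apply: contraTneq xv => ->;
  rewrite prefers_irr.
Qed.

Lemma sum_card_below s Y :
  (\sum_(y in Y) #|below s Y y|).*2 = #|Y| * #|Y|.-1.
Proof.
have below_above y : y \in Y ->
    #|below s Y y| + #|[set v in Y | prefers s v y]| = #|Y|.-1.
  move=> yY; rewrite (cardsD1 y Y) yY add1n /= -cardsUI.
  have -> : below s Y y :&: [set v in Y | prefers s v y] = set0.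
    apply/setP => v; rewrite !inE andbACA andbb.
    by case: (boolP (prefers s y v)) => [/prefers_asym ->|]; rewrite ?andbF.
  rewrite cards0 addn0; apply: eq_card => v; rewrite !inE -andb_orr andbC.
  case: (y =P v) => [->|/eqP yv]; first by rewrite !prefers_irr eqxx.
  by rewrite prefers_total // eq_sym yv.
have card_sum (P : pred 'I_m) : #|[set v in Y | P v]| = \sum_(v in Y) P v.
  rewrite -sum1_card big_mkcond [RHS]big_mkcond; apply: eq_bigr => v _.
  by rewrite inE; case: (v \in Y); case: (P v).
have above_below : \sum_(y in Y) #|[set v in Y | prefers s v y]| =
                   \sum_(y in Y) #|below s Y y|.
  rewrite (eq_bigr _ (fun y _ => card_sum (prefers s ^~ y))).
  rewrite (eq_bigr _ (fun y _ => card_sum (prefers s y))).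
  exact: exchange_big.
rewrite -addnn -{2}above_below -big_split /= (eq_bigr _ below_above).
by rewrite sum_nat_const mulnC.
Qed.

Lemma card_below_gt s X Y x y : Y \subset X :\ x -> y \in Y ->
  (forall v, v \in Y -> prefers s v x) -> x \in X ->
  #|below s X x| + #|below s Y y| < #|below s X y|.
Proof.
move=> /subsetP YX yY Y_above xX.
have disj : below s X x :&: below s Y y = set0.
  apply/setP => v; rewrite !inE.
  apply/negbTE/negP => /andP[/andP[_ xv] /andP[vY _]].
  by rewrite prefers_asym ?Y_above in xv.
have x_notin : x \notin below s X x :|: below s Y y.
  by rewrite !inE prefers_irr andbF /=; apply/negP => /andP[/YX]; rewrite !inE eqxx.
have : x |: (below s X x :|: below s Y y) \subset below s X y.
  apply/subsetP => v; rewrite !inE => /or3P[/eqP ->| /andP[vX xv] | /andP[vY yv]].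
  - by rewrite xX Y_above.
  - by rewrite vX (prefers_trans (Y_above _ yY) xv).
  - by move: (YX v vY); rewrite !inE yv => /andP[_ ->].
by move/subset_leq_card; rewrite cardsU1 x_notin cardsU disj cards0 subn0.
Qed.

Lemma voter_below_bound s X Y x : x \in X -> Y \subset X :\ x ->
  (#|Y| * #|below s X x|).*2 + #|Y| * #|Y|.+1 <=
  (\sum_(y in Y) #|below s X y|).*2 +
    [exists y in Y, prefers s x y] * (#|Y| * #|X|).*2.
Proof.
move=> xX YX; have pairs := sum_card_below s Y.
have [_|/existsPn x_below] := boolP [exists y in Y, prefers s x y].
  have : \sum_(y in Y) #|below s Y y| <= \sum_(y in Y) #|below s X y|.
    apply: leq_sum => y _; apply/subset_leq_card/belowS.
    exact: subset_trans YX (subsetDl _ _).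
  have := card_below_le s xX; have : 0 < #|X| by apply/card_gt0P; exists x.
  move: pairs; rewrite mul1n -!muln2; nia.
have Y_above v : v \in Y -> prefers s v x.
  move=> vY; have := x_below v; rewrite vY /= => xv.
  have vx : v != x by move/subsetP: YX => /(_ v vY); rewrite !inE => /andP[].
  by move: (prefers_total s vx); rewrite (negbTE xv) orbF.
have : \sum_(y in Y) (#|below s X x| + #|below s Y y| + 1) <=
       \sum_(y in Y) #|below s X y|.
  by apply: leq_sum => y yY; rewrite addn1; apply: card_below_gt.
rewrite !big_split /= !sum_nat_const mul0n addn0.
by move: pairs; rewrite -!muln2; case: #|Y| => [|r] /=; nia.
Qed.

Lemma util_pair s x y : x != y ->
  util s x [set x; y] = prefers s x y.
Proof.
move=> xy; rewrite /util.
rewrite (_ : [set z in _ | _] = if prefers s x y then [set y] else set0).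
  by case: (prefers s x y); rewrite ?cards1 ?cards0.
apply/setP => z; rewrite !inE; case: (z =P x) => [->|/eqP zx] /=.
  by case: ifP; rewrite ?inE // (negbTE xy).
by case: (z =P y) => [->|/eqP zy]; case: ifP; rewrite ?inE ?eqxx ?(negbTE zy).
Qed.

End Rankings.

Section Borda.
Variables (R : realDomainType) (m : nat).
Implicit Types (s : ranking m) (X Y : {set 'I_m}) (b : ranking m -> R).

Definition borda b X u := \sum_s b s * #|below s X u|%:R.

Lemma borda_winner_bound b X Y x : (forall s, 0 <= b s) -> x \in X ->
  (forall u, u \in X -> borda b X u <= borda b X x) ->
  Y \subset X :\ x -> (0 < #|Y|)%N ->
  (\sum_s b s) * #|Y|.+1%:R <=
    #|X|%:R *+ 2 * \sum_(s in [set s | [exists y in Y, prefers s x y]]) b s.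
Proof.
move=> b_ge0 xX x_max YX Y_gt0.
set r := #|Y|; set k := #|X|; set N := [set s | _].
pose S s := (\sum_(y in Y) #|below s X y|)%N.
have scores : \sum_s b s * (S s)%:R <= r%:R * borda b X x.
  have -> : \sum_s b s * (S s)%:R = \sum_(y in Y) borda b X y.
    by rewrite exchange_big; apply: eq_bigr => s _; rewrite natr_sum mulr_sumr.
  rewrite mulr_natl -sumr_const; apply: ler_sum => y yY; apply: x_max.
  by move/subsetP: YX => /(_ y yY); rewrite !inE => /andP[].
have voters : \sum_s b s * ((r * #|below s X x|).*2 + r * r.+1)%:R <=
              \sum_s b s * ((S s).*2 + (s \in N) * (r * k).*2)%:R.
  apply: ler_sum => s _; apply: ler_wpM2l => //; rewrite ler_nat inE.
  exact: voter_below_bound.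
have lhsE : \sum_s b s * ((r * #|below s X x|).*2 + r * r.+1)%:R =
            borda b X x * (r%:R * 2) + (\sum_s b s) * (r%:R * (r%:R + 1)).
  rewrite !mulr_suml -big_split; apply: eq_bigr => s _ /=.
  by rewrite -muln2; ring.
have rhsE : \sum_s b s * ((S s).*2 + (s \in N) * (r * k).*2)%:R =
            (\sum_s b s * (S s)%:R) * 2 + (\sum_(s in N) b s) * (r%:R * k%:R * 2).
  rewrite [\sum_(s in N) _]big_mkcond !mulr_suml -big_split.
  apply: eq_bigr => s _ /=.
  by rewrite -!muln2; case: (s \in N); rewrite ?mul1n ?mul0n; ring.
have r_gt0 : (0 : R) < r%:R by rewrite ltr0n.
rewrite -(ler_pM2l r_gt0) -natr1 mulr2n; move: voters; rewrite lhsE rhsE; nra.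
Qed.

End Borda.

Section Precedes.
Variable T : eqType.
Implicit Types (sq : seq T) (u v x : T).

Definition precedes sq u v := (v \in sq) && (index u sq < index v sq)%N.

Lemma precedes_mem sq u v : precedes sq u v -> u \in sq.
Proof.
by case/andP => _ lt; rewrite -index_mem (leq_trans lt (index_size _ _)).
Qed.

Lemma precedes_notin sq u v : u \notin sq -> precedes sq u v = false.
Proof. by apply: contraNF => /precedes_mem. Qed.

Lemma precedes_cons x sq u v : x \notin sq ->
  precedes (x :: sq) u v = (u == x) && (v \in sq) || precedes sq u v.
Proof.
move=> xs; rewrite /precedes /= inE !(eq_sym x).
case: (u =P x) => [->|_]; case: (v =P x) => [->|_] //=;
  by [rewrite (negbTE xs) | case: (v \in sq)].
Qed.

End Precedes.

Lemma ranking_of_seq m (sq : seq 'I_m) : uniq sq -> (forall z, z \in sq) ->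
  exists t : ranking m, forall u v, prefers t u v = precedes sq u v.
Proof.
move=> uniq_sq all_sq.
have size_sq : size sq = m.
  by rewrite -(card_uniqP uniq_sq) -[RHS]card_ord; apply: eq_card.
have nth_inj : injective (fun i : 'I_m => nth i sq i).
  move=> i j /eqP; rewrite (set_nth_default j) ?size_sq //.
  by rewrite nth_uniq ?size_sq // => /eqP /val_inj.
exists (perm nth_inj) => u v.
have rank w : val ((perm nth_inj)^-1 w)%g = index w sq.
  have w_lt : (index w sq < m)%N by move: (index_mem w sq); rewrite all_sq size_sq.
  suff -> : ((perm nth_inj)^-1 w)%g = Ordinal w_lt by [].
  by apply: (perm_inj (s := perm nth_inj)); rewrite permKV permE /= nth_index.
by rewrite /prefers /precedes !rank all_sq.
Qed.

Section Greedy.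
Variables (R : realFieldType) (m : nat).
Implicit Types (s : ranking m) (X : {set 'I_m}) (b : ranking m -> R)
  (sq : seq 'I_m) (pi : ranking m -> 'I_m -> 'I_m -> R) (f : ranking m -> 'I_m -> R).

Definition spent pi sq s := \sum_u \sum_(v | precedes sq u v) pi s u v.

Definition payments b sq pi :=
  [/\ forall s u v, precedes sq u v -> 0 <= pi s u v <= (prefers s u v)%:R,
      forall s, spent pi sq s <= b s &
      forall u v, precedes sq u v -> \sum_s pi s u v <= 1].

Definition pay_first x f pi s u v := if u == x then f s v else pi s u v.

Lemma spent_pay_first x f pi sq s : x \notin sq ->
  spent (pay_first x f pi) (x :: sq) s = \sum_(v | v \in sq) f s v + spent pi sq s.
Proof.
move=> xs; rewrite /spent (bigD1 x) // [X in _ = _ + X](bigD1 x) //=.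
rewrite [X in _ = _ + (X + _)]big_pred0 ?add0r => [|v]; last exact: precedes_notin.
congr (_ + _).
  apply: eq_big => [v|v _]; last by rewrite /pay_first eqxx.
  by rewrite precedes_cons // eqxx precedes_notin ?orbF.
apply: eq_bigr => u /negbTE ux; apply: eq_big => [v|v _]; last by rewrite /pay_first ux.
by rewrite precedes_cons // ux.
Qed.

Lemma payments_pay_first b sq pi x f : x \notin sq ->
  (forall s v, 0 <= f s v <= (prefers s x v)%:R) ->
  (forall v, v \in sq -> \sum_s f s v <= 1) ->
  payments (fun s => b s - \sum_v f s v) sq pi ->
  payments b (x :: sq) (pay_first x f pi).
Proof.
move=> xs f_bounds f_cap [pi_bounds pi_spent pi_cap].
have first_or_later u v : precedes (x :: sq) u v ->
    u = x /\ v \in sq \/ u != x /\ precedes sq u v.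
  rewrite precedes_cons // => /orP[/andP[/eqP -> vs]|uv]; [by left | right].
  by split=> //; apply: contraTneq (precedes_mem uv) => ->.
rewrite /pay_first; split.
- move=> s u v /first_or_later[[-> _]|[/negbTE -> uv]]; rewrite ?eqxx //.
  exact: pi_bounds.
- move=> s; rewrite spent_pay_first //; have := pi_spent s.
  have : \sum_(v | v \in sq) f s v <= \sum_v f s v.
    rewrite [X in _ <= X](bigID (mem sq)) /= lerDl.
    by apply: sumr_ge0 => v _; case/andP: (f_bounds s v).
  lra.
- move=> u v /first_or_later[[-> vs]|[/negbTE -> uv]]; rewrite ?eqxx //.
    exact: f_cap.
  exact: pi_cap.
Qed.

Lemma pay_first_transport b X x p f sq pi :
  (forall s v, 0 <= f s v) -> (forall s v, ~~ prefers s x v -> f s v = 0) ->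
  (forall v, \sum_s f s v = if v \in X :\ x then p else 0) -> 0 <= p -> p <= 1 ->
  sq =i X :\ x -> payments (fun s => b s - \sum_v f s v) sq pi ->
  payments b (x :: sq) (pay_first x f pi) /\
  \sum_s spent (pay_first x f pi) (x :: sq) s = p * #|X :\ x|%:R + \sum_s spent pi sq s.
Proof.
move=> f_ge0 f_pref f_paid p_ge0 p_le1 mem_sq pay.
have x_sq : x \notin sq by rewrite mem_sq !inE eqxx.
have f_le_p s v : f s v <= p.
  have : \sum_s' f s' v <= p by rewrite f_paid; case: ifP.
  by apply: le_trans; rewrite (bigD1 s) //= lerDl; exact: sumr_ge0.
split.
  apply: payments_pay_first => // [s v|v vs].
    rewrite f_ge0 /=; case: (boolP (prefers s x v)) => [_|/f_pref -> //].
    exact: le_trans (f_le_p s v) p_le1.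
  by rewrite f_paid -mem_sq vs.
rewrite (eq_bigr _ (fun s _ => spent_pay_first f pi s x_sq)) big_split /=.
congr (_ + _); rewrite exchange_big (eq_bigr (fun=> p)) => [|v vs]; last first.
  by rewrite f_paid -mem_sq vs.
by rewrite sumr_const mulr_natr; congr (_ *+ _); apply: eq_card.
Qed.

(* With k other candidates, borda_winner_bound makes Hall's condition hold
   for any payment p with p * 2k <= beta; each pair is paid at most 1. *)
Definition greedy_price (k : nat) (beta : R) := Num.min 1 (beta / (k%:R * 2)).

Fixpoint greedy_total (k : nat) (beta : R) : R :=
  if k is k'.+1 then
    greedy_price k' beta * k'%:R + greedy_total k' (beta - greedy_price k' beta * k'%:R)
  else 0.

Lemma greedy_price_ge0 k beta : 0 <= beta -> 0 <= greedy_price k beta.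
Proof. by move=> beta_ge0; rewrite le_min ler01 divr_ge0 // mulr_ge0. Qed.

Lemma greedy_price_le1 k beta : greedy_price k beta <= 1.
Proof. by rewrite ge_min lexx. Qed.

Lemma greedy_price_budget k beta : 0 <= beta ->
  greedy_price k beta * (k%:R * 2) <= beta.
Proof.
move=> beta_ge0; case: (posnP k) => [->|k_gt0]; first by rewrite mul0r mulr0.
have k2_gt0 : (0 : R) < k%:R * 2 by rewrite mulr_gt0 ?ltr0n.
by rewrite -ler_pdivlMr // ge_min lexx orbT.
Qed.

Lemma borda_winner_transport b X x p : (forall s, 0 <= b s) -> x \in X ->
  (forall u, u \in X -> borda b X u <= borda b X x) ->
  0 <= p -> p * (#|X :\ x|%:R * 2) <= \sum_s b s ->
  transport (fun s y => prefers s x y) b (fun y => if y \in X :\ x then p else 0).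
Proof.
move=> b_ge0 xX x_max p_ge0 p_budget.
have cardX : #|X| = #|X :\ x|.+1 by rewrite (cardsD1 x X) xX.
apply: hall_transport => // [y|Z]; first by case: ifP.
set Y := Z :&: (X :\ x); rewrite /slack subr_ge0.
have -> : \sum_(y in Z) (if y \in X :\ x then p else 0) = p * #|Y|%:R.
  by rewrite (sum_restrict _ (fun=> p)) sumr_const mulr_natr.
have [->|Y_gt0] := posnP #|Y|; first by rewrite mulr0 sumr_ge0.
have YX : Y \subset X :\ x := subsetIr _ _.
apply: le_trans (ler_psum_subset (neighboursS _ (subsetIl Z (X :\ x))) b_ge0).
have bound := borda_winner_bound b_ge0 xX x_max YX Y_gt0.
have beta_ge0 : 0 <= \sum_s b s by apply: sumr_ge0.
move: bound p_budget (subset_leq_card YX) Y_gt0.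
rewrite cardX -(ler_nat R) -(ltr_nat R) -!natr1.
nra.
Qed.

Lemma greedy_payments k X b : #|X| = k -> (forall s, 0 <= b s) ->
  exists sq pi, [/\ uniq sq, sq =i X, payments b sq pi &
                   greedy_total k (\sum_s b s) <= \sum_s spent pi sq s].
Proof.
elim: k X b => [|k IH] X b cardX b_ge0.
  exists [::], (fun _ _ _ => 0); split => //.
  - by move=> z; rewrite (cards0_eq cardX) in_set0.
  - split => // s; rewrite /spent big1 // => u _; exact: big1.
  - by rewrite /= sumr_ge0 // => s _; rewrite /spent sumr_ge0 // => u _; rewrite big1.
have [x0 x0X] : exists x0, x0 \in X by apply/set0Pn; rewrite -card_gt0 cardX.
case: (arg_maxP (borda b X) x0X) => x xX x_max; have {}xX : x \in X := xX.
have cardXx : #|X :\ x| = k by move: cardX; rewrite (cardsD1 x X) xX add1n => -[].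
set beta := \sum_s b s; set p := greedy_price k beta.
have beta_ge0 : 0 <= beta by apply: sumr_ge0.
have p_ge0 : 0 <= p := greedy_price_ge0 k beta_ge0.
have p_le1 : p <= 1 := greedy_price_le1 k beta.
have [f [f_ge0 f_pref f_spent f_paid]] : transport (fun s y => prefers s x y) b
    (fun y => if y \in X :\ x then p else 0).
  apply: borda_winner_transport => //; rewrite cardXx.
  exact: greedy_price_budget.
pose b' s := b s - \sum_y f s y.
have b'_ge0 s : 0 <= b' s by rewrite subr_ge0 f_spent.
have beta' : \sum_s b' s = beta - p * k%:R.
  rewrite sumrB exchange_big (eq_bigr _ (fun v _ => f_paid v)) -big_mkcond /=.
  by rewrite sumr_const cardXx mulr_natr.
have [sq [pi [uniq_sq mem_sq pay total]]] := IH _ b' cardXx b'_ge0.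
have [pay' spent'] := pay_first_transport f_ge0 f_pref f_paid p_ge0 p_le1 mem_sq pay.
exists (x :: sq), (pay_first x f pi); split => //.
- by rewrite /= mem_sq !inE eqxx uniq_sq.
- by move=> z; rewrite inE mem_sq !inE; case: (z =P x) => [->|].
- by rewrite spent' cardXx /= -/p lerD2l -beta'.
Qed.

End Greedy.

Section GreedyTotal.
Variable R : realFieldType.

Lemma greedy_price_frac k (beta : R) : (0 < k)%N -> beta <= k%:R * 2 ->
  greedy_price k beta = beta / (k%:R * 2).
Proof.
move=> k_gt0 le; have k2_gt0 : (0 : R) < k%:R * 2 by rewrite mulr_gt0 ?ltr0n.
by rewrite /greedy_price min_r // ler_pdivrMr ?mul1r.
Qed.

Lemma greedy_price_one k (beta : R) : (0 < k)%N -> k%:R * 2 <= beta ->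
  greedy_price k beta = 1.
Proof.
move=> k_gt0 le; have k2_gt0 : (0 : R) < k%:R * 2 by rewrite mulr_gt0 ?ltr0n.
by rewrite /greedy_price min_l // ler_pdivlMr ?mul1r.
Qed.

Lemma greedy_totalS k (beta : R) : greedy_total k.+1 beta =
  greedy_price k beta * k%:R + greedy_total k (beta - greedy_price k beta * k%:R).
Proof. by []. Qed.

Lemma greedy_total2 (beta : R) : greedy_total 2 beta = greedy_price 1 beta.
Proof. by rewrite /= !mulr0 !addr0 mulr1. Qed.

Lemma greedy_total_binomial_ge3 n :
  greedy_total n.+3 ('C(n.+3, 2)%:R : R) = 'C(n.+3, 2)%:R - 3 / 4.
Proof.
elim: n => [|n IH].
  rewrite greedy_totalS greedy_total2 (_ : 'C(3, 2) = 3%N) //.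
  by rewrite greedy_price_frac // ?greedy_price_frac //; lra.
have C_step : 'C(n.+4, 2) = ('C(n.+3, 2) + n.+3)%N by rewrite binS bin1.
have C_ge : (n.+3 <= 'C(n.+3, 2))%N.
  by rewrite binS bin1 -add1n leq_add2r bin_gt0.
rewrite greedy_totalS greedy_price_one //; last first.
  by rewrite C_step natrD; move: C_ge; rewrite -(ler_nat R); lra.
by rewrite mul1r C_step natrD addrK IH; lra.
Qed.

Lemma greedy_total_binomial n : (1 < n)%N ->
  'C(n, 2)%:R - 1 < greedy_total n ('C(n, 2)%:R : R).
Proof.
case: n => [|[|[|n]]] // _; last by rewrite greedy_total_binomial_ge3; lra.
by rewrite binn greedy_total2 greedy_price_frac //; lra.
Qed.

End GreedyTotal.

Lemma pair_priceable_of_payments (R : realType) m (P : ranking m -> R) t sq pi :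
  (forall u v, prefers t u v = precedes sq u v) ->
  payments (fun s => 'C(m, 2)%:R * P s) sq pi ->
  'C(m, 2)%:R - 1 < \sum_s spent pi sq s -> pair_priceable P t.
Proof.
move=> tE [pi_bounds pi_spent pi_cap] paid.
have spentE s : \sum_x \sum_(y | prefers t x y) pi s x y = spent pi sq s.
  by apply: eq_bigr => x _; apply: eq_bigl => y; rewrite tE.
have pi_le s x y : precedes sq x y -> pi s x y <= (prefers s x y)%:R.
  by move=> xy; case/andP: (pi_bounds s x y xy).
exists pi; repeat split.
- move=> s x y; rewrite tE => xy; case/andP: (pi_bounds s x y xy) => -> _ /=.
  by rewrite (le_trans (pi_le s x y xy)) //; case: (prefers s x y).
- move=> s x y; rewrite tE => xy; rewrite util_pair; first exact: pi_le.
  by apply: contraTneq xy => ->; rewrite /precedes ltnn andbF.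
- by move=> s; rewrite spentE.
- by move=> x y; rewrite tE; exact: pi_cap.
- by under eq_bigr do rewrite spentE.
Qed.

Theorem mainTheorem10 (R : realType) (m : nat) (hm : (2 <= m)%N)
    (P : ranking m -> R) (hP : is_profile P) :
  exists t : ranking m, pair_priceable P t.
Proof.
case: hP => P_bounds P_sum.
pose b s := 'C(m, 2)%:R * P s.
have b_ge0 s : 0 <= b s by rewrite mulr_ge0 ?ler0n //; case/andP: (P_bounds s).
have sum_b : \sum_s b s = 'C(m, 2)%:R by rewrite -mulr_sumr P_sum mulr1.
have cardT : #|[set: 'I_m]| = m by rewrite cardsT card_ord.
have [sq [pi [uniq_sq mem_sq pay paid]]] := greedy_payments cardT b_ge0.
have [t tE] := ranking_of_seq uniq_sq (fun z => etrans (mem_sq z) (in_setT z)).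
exists t; apply: pair_priceable_of_payments tE pay _.
by rewrite sum_b in paid; apply: lt_le_trans paid; exact: greedy_total_binomial.
Qed.
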